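(* For all $x,y\in\mathcal{X}$, $N\in\mathbb{N}^+$ and $\eta>0$, $$\tilde\alpha_N(x,y)-\alpha(x,y)\le\eta+2\sup_{x'\in\mathcal{X}}\mathbb{P}_{Q_{x',N}}\left[|W_{x',N}-1|\ge\frac{\eta}{2(1+\eta)}\right].$$
   Context: Let $(\mathcal{X},\mathcal{B}(\mathcal{X}))$ be a measurable space, $\pi$ a probability distribution on it with density $\pi(x)$ with respect to a reference measure, and $q$ a Markov proposal kernel. For each $x\in\mathcal{X}$, $N\in\mathbb{N}^+$, $Q_{x,N}$ is a probability distribution on $[0,\infty)$ such that $W_{x,N}\sim Q_{x,N}$ satisfies $W_{x,N}>0$ a.s. and $\mathbb{E}[W_{x,N}]=1$. Define $\alpha(x,y)=\min\{1,\frac{\pi(dy)q(y,dx)}{\pi(dx)q(x,dy)}\}$ and $\tilde\alpha_N(x,y)=\mathbb{E}[\min\{1,\frac{\pi(dy)q(y,dx)}{\pi(dx)q(x,dy)}\frac{W_{y,N}}{W_{x,N}}\}]$ with $W_{x,N}\sim Q_{x,N}$ and $W_{y,N}\sim Q_{y,N}$ independent. *)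

From HB Require Import structures.
From mathcomp Require Import all_boot all_order all_algebra.
From mathcomp Require Import all_classical all_reals all_analysis.
Set Implicit Arguments. Unset Strict Implicit. Unset Printing Implicit Defensive.
Import Order.TTheory GRing.Theory Num.Theory.
Local Open Scope classical_set_scope.
Local Open Scope ring_scope.
Local Open Scope ereal_scope.

(* alpha(x,y) = min{1, r x y}, where r x y stands for the acceptance ratio
   pi(dy) q(y,dx) / (pi(dx) q(x,dy)) (a nonnegative real number). *)
Definition mh_alpha (X : Type) (R : realType) (r : X -> X -> R) (x y : X) : R :=
  Num.min 1%R (r x y).

(* tilde alpha_N(x,y) = E[min{1, r x y * W_y / W_x}] with W_x ~ Q x N and
   W_y ~ Q y N independent, i.e. the expectation under the product measure
   (Q x N) \x (Q y N); a pair w = (W_x, W_y). *)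
Definition pm_alpha (X : Type) (R : realType) (r : X -> X -> R)
    (Q : X -> nat -> probability R R) (N : nat) (x y : X) : \bar R :=
  \int[(Q x N \x Q y N)%E]_(w in setT)
     (Num.min 1%R (r x y * (w.2 / w.1)))%:E.

Definition weight_law (R : realType) (P : probability R R) : Prop :=
  P [set w : R | (0 < w)%R] = 1 /\ \int[P]_(w in setT) w%:E = 1.

From HB Require Import structures.
From mathcomp Require Import all_boot all_order all_algebra.
From mathcomp Require Import all_classical all_reals all_analysis.
From mathcomp Require Import measurable_realfun lra.
Import Order.TTheory GRing.Theory Num.Theory.
Local Open Scope classical_set_scope.
Local Open Scope ring_scope.

(* When both weights are within [eta / (2 (1 + eta))] of 1, their ratio is at
   most [1 + eta], so the noisy acceptance probability exceeds the exact one by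
   at most [eta]. Otherwise one of the two weights falls in the set
   [|W - 1| >= eta / (2 (1 + eta))], and the integrand, being at most 1, is
   bounded by the indicator of that event. Integrating against the product law
   yields [alpha + eta + Q_x(A) + Q_y(A)], and both probabilities are bounded by
   the supremum over all states. *)

Lemma ratio_le_of_near1 (R : realFieldType) (eta u v : R) :
  0 < eta -> `|u - 1| < eta / (2 * (1 + eta)) -> `|v - 1| < eta / (2 * (1 + eta)) ->
  v / u <= 1 + eta.
Proof.
move=> eta_gt0; set del := eta / _.
have del_eta : del * (2 * (1 + eta)) = eta.
  by rewrite /del mulfVK // gt_eqF // mulr_gt0 // addr_gt0.
rewrite !ltr_norml => /andP[u_lo u_hi] /andP[v_lo v_hi].
have u_gt0 : 0 < u by nra.
by rewrite ler_pdivrMr //; nra.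
Qed.

Lemma min1_scale_le (R : realDomainType) (r t eta : R) :
  0 <= r -> 0 <= eta -> t <= 1 + eta -> Num.min 1 (r * t) <= Num.min 1 r + eta.
Proof.
move=> r_ge0 eta_ge0 t_le; case: (leP 1 r) => [r_ge1 | r_lt1].
  by rewrite ge_min lerDl eta_ge0.
by rewrite ge_min; apply/orP; right; nra.
Qed.

Definition far_from1 {R : realType} (c : R) : set R := [set z | c <= `|z - 1|].

Lemma min1_ratio_le_indic (R : realType) (r eta c u v : R) :
  0 <= r -> 0 < eta -> c <= eta / (2 * (1 + eta)) ->
  Num.min 1 (r * (v / u)) <=
    Num.min 1 r + eta + \1_(far_from1 c) u + \1_(far_from1 c) v.
Proof.
move=> r_ge0 eta_gt0 c_le.
have min1_ge0 : 0 <= Num.min 1 r by rewrite le_min ler01 r_ge0.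
have min_le1 : Num.min 1 (r * (v / u)) <= 1 by rewrite ge_min lexx.
have near1 z : z \notin far_from1 c -> `|z - 1| < eta / (2 * (1 + eta)).
  move=> /negP z_far; apply: lt_le_trans c_le; rewrite ltNge; apply/negP => z_ge.
  by apply: z_far; rewrite in_setE.
rewrite !indicE; case: (boolP (u \in far_from1 c)) => [_ | /near1 u_near].
  apply: le_trans min_le1 _; have := ler0n R (v \in far_from1 c).
  by rewrite /= mulr1n; lra.
case: (boolP (v \in far_from1 c)) => [_ | /near1 v_near].
  by apply: le_trans min_le1 _; rewrite /= mulr1n; lra.
rewrite !addr0; apply: min1_scale_le => //; first exact: ltW.
exact: ratio_le_of_near1.
Qed.

(* No measurability of [f] or [g] is needed: the integral of a nonnegative
   function is a supremum over the simple functions below it, and the negative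
   part of [f] only decreases its integral. *)
Lemma integralT_le_nonneg (R : realType) d (T : measurableType d) (m : measure T R)
    (f g : T -> \bar R) :
  (forall x, 0 <= g x)%E -> (forall x, f x <= g x)%E ->
  (\int[m]_(x in setT) f x <= \int[m]_(x in setT) g x)%E.
Proof.
move=> g_ge0 f_le_g; rewrite integralE.
apply: (@le_trans _ _ (\int[m]_(x in setT) f^\+ x)%E).
  rewrite -[leRHS]sube0; apply: leeB => //.
  by apply: integral_ge0 => x _; exact: funeneg_ge0.
rewrite !ge0_integralTE //.
apply: le_ereal_sup => _ [h h_le <-]; exists h => //= x.
by apply: le_trans (h_le x) _; rewrite funeposE ge_max f_le_g g_ge0.
Qed.

Section ProductIntegral.
Context (R : realType) (d1 d2 : measure_display).
Context (T1 : measurableType d1) (T2 : measurableType d2).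
Context (mu : probability T1 R) (nu : probability T2 R).

Lemma product_probability_setXT (A : set T1) :
  measurable A -> ((mu \x nu) (A `*` setT) = mu A)%E.
Proof.
move=> mA; rewrite product_measure1E // -[RHS]mule1.
by congr (_ * _)%E; exact: probability_setT.
Qed.

Lemma product_probability_setTX (B : set T2) :
  measurable B -> ((mu \x nu) (setT `*` B) = nu B)%E.
Proof.
move=> mB; rewrite product_measure1E // -[RHS]mul1e.
by congr (_ * _)%E; exact: probability_setT.
Qed.

Lemma integral_cst_add_indic_fst_snd (c : R) (A : set T1) (B : set T2) :
  0 <= c -> measurable A -> measurable B ->
  (\int[mu \x nu]_(w in setT)
     ((c%:E + (\1_A w.1)%:E) + (\1_B w.2)%:E) = c%:E + mu A + nu B)%E.
Proof.
move=> c_ge0 mA mB.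
have indic_fst w : \1_A w.1 = \1_(A `*` setT) w :> R.
  by rewrite !indicE in_setX in_setT andbT.
have indic_snd w : \1_B w.2 = \1_(setT `*` B) w :> R.
  by rewrite !indicE in_setX in_setT.
under eq_integral do rewrite indic_fst indic_snd.
have mAT : measurable (A `*` [set: T2]) by exact: measurableX.
have mTB : measurable ([set: T1] `*` B) by exact: measurableX.
rewrite ge0_integralD //; last 3 first.
- by move=> w _; rewrite -EFinD lee_fin addr_ge0.
- by apply: emeasurable_funD => //; apply/measurable_EFinP; exact: measurable_indic.
- by apply/measurable_EFinP; exact: measurable_indic.
rewrite ge0_integralD //; last exact/measurable_EFinP/measurable_indic.
rewrite (integral_cst _ measurableT) !integral_indic // !setIT.
rewrite -setXTT; congr (_ + _ + _)%E.
- rewrite -[RHS]mule1; congr (_ * _)%E.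
  by rewrite -(probability_setT mu); exact: product_probability_setXT.
- exact: product_probability_setXT.
- exact: product_probability_setTX.
Qed.

End ProductIntegral.

Lemma measurable_dist_ge (R : realType) (a c : R) :
  measurable [set w : R | c <= `|w - a|].
Proof.
have mdist : measurable_fun setT (fun w : R => `|w - a|).
  by apply: measurableT_comp => //; exact: measurable_funB.
rewrite -[X in measurable X]setTI.
have -> : [set w : R | c <= `|w - a|] = (fun w => `|w - a|) @^-1` `[c, +oo[.
  by apply/seteqP; split => w /=; rewrite in_itv /= andbT.
exact: mdist.
Qed.

Theorem lemma3p7 (d : measure_display) (X : measurableType d) (R : realType)
    (r : X -> X -> R) (Q : X -> nat -> probability R R) :
  (forall x y, 0 <= r x y) ->
  (forall x N, (0 < N)%N -> weight_law (Q x N)) ->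
  forall (x y : X) (N : nat) (eta : R), (0 < N)%N -> 0 < eta ->
  (pm_alpha r Q N x y - (mh_alpha r x y)%:E <=
   eta%:E + 2%:E * ereal_sup
     [set Q x' N [set w : R | (eta / (2 * (1 + eta)) <= `|w - 1|)%R]
     | x' in [set: X]])%E.
Proof.
move=> r_ge0 _ x y N eta _ eta_gt0.
set A := [set w : R | _]; set S := ereal_sup _; set al := mh_alpha r x y.
have mA : measurable A by exact: measurable_dist_ge.
have QA_le_S x' : (Q x' N A <= S)%E by apply: ereal_sup_ubound; exists x'.
have S_ge0 : (0 <= S)%E := le_trans (measure_ge0 (Q x N) A) (QA_le_S x).
have al_ge0 : 0 <= al by rewrite le_min ler01 r_ge0.
rewrite leeBlDr //; apply: (@le_trans _ _
  (\int[(Q x N \x Q y N)%E]_(w in setT)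
     (((al + eta)%:E + (\1_A w.1)%:E) + (\1_A w.2)%:E))%E).
  apply: integralT_le_nonneg => w; rewrite -!EFinD lee_fin.
    by rewrite !addr_ge0 // ltW.
  exact: min1_ratio_le_indic.
rewrite integral_cst_add_indic_fst_snd //; last by rewrite addr_ge0 // ltW.
have -> : (2%:E * S = S + S)%E by rewrite -[2%R]/(1 + 1)%R EFinD ge0_muleDl ?mul1e.
have -> : (eta%:E + (S + S) + al%:E = (al + eta)%:E + S + S)%E.
  by rewrite [LHS]addeC EFinD !addeA.
by apply: leeD; [apply: leeD|exact: QA_le_S]; [exact: lexx|exact: QA_le_S].
Qed.
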